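(* A random permutation $\Pi$ with values in $S_n$ is bi-decomposable if and only if for all pairs of consecutive partitions $\underline{\kappa}=(\underline{\kappa}_1,\ldots,\underline{\kappa}_s)$ and $\underline{\lambda}=(\underline{\lambda}_1,\ldots,\underline{\lambda}_t)$ of $\{1,\ldots,n\}$, the random variables $\Pi_{\underline{\kappa}_i\times\underline{\lambda}_j}$, $1\le i\le s$, $1\le j\le t$, are conditionally independent given the pair $(\{\Pi_{\underline{\kappa}}\},\{\Pi^{-1}_{\underline{\lambda}}\})$.
   Context: $S_n$ is the group of permutations of $\{1,\ldots,n\}$; $\Pi$ is a random element of $S_n$. For a vector $v$, $v\{i:j\}=\{v(i),\ldots,v(j)\}$ and $v(i:j)=(v(i),\ldots,v(j))$. $\Pi$ is called $L$-decomposable if for every $2\le k\le n-2$ and $\pi\in S_n$, $P(\Pi(k+1)=\pi(k+1)\mid \Pi(1:k)=\pi(1:k)) = P(\Pi(k+1)=\pi(k+1)\mid \Pi\{1:k\}=\pi\{1:k\})$ whenever the left side is defined. $\Pi$ is bi-decomposable if both $\Pi$ and $\Pi^{-1}$ are $L$-decomposable. A consecutive partition is given by $0=\kappa_0<\kappa_1<\cdots<\kappa_{s}=n$ with blocks $\underline{\kappa}_i=\{\kappa_{i-1}+1,\ldots,\kappa_i\}$; for $\pi\in S_n$, $\{\pi_{\underline{\kappa}}\}=(\pi\{\kappa_{i-1}+1:\kappa_i\})_{i=1}^{s}$ is the vector of unordered marginals (and similarly $\{\pi^{-1}_{\underline{\lambda}}\}$ for $\pi^{-1}$). For $\pi\in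 S_n$, $\pi_{\underline{\kappa}_i\times\underline{\lambda}_j}=\{(a,\pi(a)): a\in\underline{\kappa}_i,\ \pi(a)\in\underline{\lambda}_j\}$. *)

(* Permutations of {1,...,n} are modelled as {perm 'I_n}
   (0-based indices). A random permutation is a probability mass function
   p : {perm 'I_n} -> R over a real field R. *)
From HB Require Import structures.
From mathcomp Require Import all_boot all_order all_algebra all_fingroup.
Set Implicit Arguments. Unset Strict Implicit. Unset Printing Implicit Defensive.
Import Order.TTheory GRing.Theory Num.Theory.
Local Open Scope ring_scope.

Section Defs.
Variables (R : realFieldType) (n : nat).
Implicit Types (p : {perm 'I_n} -> R) (E : pred {perm 'I_n}).

Definition Pr p E : R := \sum_(s : {perm 'I_n} | E s) p s.

Definition is_distr p : Prop := (forall s, 0 <= p s) /\ \sum_s p s = 1.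

Definition pinv p : {perm 'I_n} -> R := fun s => p s^-1%g.

(* Index k (as a nat) with 2 <= k <= n-2: the prefix
   Pi(1:k) is the values at 0-based indices a < k, Pi(k+1) is the value at
   0-based index k. The left conditional probability is defined iff
   P(Pi(1:k) = pi(1:k)) > 0. *)
Definition L_decomposable p : Prop :=
  forall (k : 'I_n) (pi : {perm 'I_n}), (2 <= k)%N -> (k <= n - 2)%N ->
  let A := [pred s : {perm 'I_n} | s k == pi k] in
  let B := [pred s : {perm 'I_n} | [forall a : 'I_n, (a < k)%N ==> (s a == pi a)]] in
  let C := [pred s : {perm 'I_n} |
              [set s a | a : 'I_n & (a < k)%N] == [set pi a | a : 'I_n & (a < k)%N]] in
  0 < Pr p B ->
  Pr p [predI A & B] / Pr p B = Pr p [predI A & C] / Pr p C.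

Definition bi_decomposable p : Prop := L_decomposable p /\ L_decomposable (pinv p).

Definition consec_part (s : nat) (kap : nat -> nat) : Prop :=
  kap 0%N = 0%N /\ kap s = n /\ forall i : 'I_s, (kap i < kap i.+1)%N.

Definition block (kap : nat -> nat) (i : nat) : {set 'I_n} :=
  [set a : 'I_n | (kap i <= a < kap i.+1)%N].

Definition graph_block (kap lam : nat -> nat) (i j : nat) (s : {perm 'I_n})
  : {set 'I_n * 'I_n} :=
  [set x : 'I_n * 'I_n | [&& x.1 \in block kap i, x.2 \in block lam j & s x.1 == x.2]].

Definition cond_indep_blocks p (s : nat) (kap : nat -> nat) (t : nat) (lam : nat -> nat)
  : Prop :=
  forall (y1 : 'I_s -> {set 'I_n}) (y2 : 'I_t -> {set 'I_n})
         (x : 'I_s -> 'I_t -> {set 'I_n * 'I_n}),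
  let EY := [pred g : {perm 'I_n} |
               [forall i : 'I_s, g @: block kap i == y1 i] &&
               [forall j : 'I_t, g^-1%g @: block lam j == y2 j]] in
  let EX := [pred g : {perm 'I_n} |
               [forall i : 'I_s, forall j : 'I_t, graph_block kap lam i j g == x i j]] in
  0 < Pr p EY ->
  Pr p [predI EX & EY] / Pr p EY =
  \prod_(i : 'I_s) \prod_(j : 'I_t)
     (Pr p [predI [pred g | graph_block kap lam i j g == x i j] & EY] / Pr p EY).

End Defs.

(* If Pi is L-decomposable, the chain rule writes
   p(g) = P(Pi agrees with g on [0,k)) * T_k(g), where the tail factor T_k(g)
   only depends on the head set g{0..k-1} and on the values of g from k on
   (p_factor).  Hence if g and h have the same head set at k, swapping their
   heads preserves p(g) p(h) (splice_exchange).  Exchanging heads is then a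
   measure-preserving involution of Y x Y for every event Y closed under
   splicing, which makes head events and tail events conditionally independent
   given Y (splice_indep).  The marginal event ({Pi_kap}, {Pi^-1_lam}) = (y1, y2)
   is such a Y at every cut point of kap (rows_indep), and, applying the same
   to Pi^-1, at every cut point of lam for inverse images (cols_indep).
   The product rule (cPr_meet) then factorizes the blocks, row by row and
   column by column (bidecomposable_cond_indep).

   For the partitions [0,k) | [k,n) and [0,n), the event
   {Pi(1:k) = pi(1:k)} is {head block = its value} intersected with
   {Pi{1:k} = pi{1:k}}, and {Pi(k+1) = pi(k+1)} is determined by the tail
   block; conditional independence of the two blocks thus gives
   L-decomposability (cond_indep_Ldec).  Since the block condition is
   symmetric under inversion (cond_indep_pinv), Pi^-1 is L-decomposable too. *)

From HB Require Import structures.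
From mathcomp Require Import all_boot all_order all_algebra all_fingroup.
From mathcomp Require Import zify.
Set Implicit Arguments. Unset Strict Implicit. Unset Printing Implicit Defensive.
Import Order.TTheory GRing.Theory Num.Theory.
Local Open Scope ring_scope.

Lemma forall_ltS N (P : pred 'I_N) (k : 'I_N) :
  [forall a : 'I_N, (a < k.+1)%N ==> P a] = [forall a : 'I_N, (a < k)%N ==> P a] && P k.
Proof.
apply/forallP/andP=> [P_lt | [/forallP P_lt Pk] a].
  split; last exact: (implyP (P_lt k) (ltnSn k)).
  by apply/forallP=> a; apply/implyP=> lt_ak; apply: (implyP (P_lt a)); apply: ltnW.
apply/implyP; rewrite ltnS leq_eqVlt => /orP[/eqP a_k | ]; last exact: (implyP (P_lt a)).
by rewrite (_ : a = k) //; apply: val_inj.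
Qed.

Section Splicing.
Variable n : nat.
Implicit Types g h : {perm 'I_n}.

Definition head_set g (k : nat) : {set 'I_n} := [set g a | a : 'I_n & (a < k)%N].

Definition splice_fun g h (k : nat) : 'I_n -> 'I_n :=
  fun a => if (a < k)%N then g a else h a.

Lemma splice_fun_inj g h k :
  head_set g k = head_set h k -> injective (splice_fun g h k).
Proof.
have cross u v (a1 a2 : 'I_n) : head_set u k = head_set v k ->
    (a1 < k)%N -> (k <= a2)%N -> u a1 != v a2.
  move=> eq_head lt1 le2; apply/eqP=> e.
  have : u a1 \in head_set v k by rewrite -eq_head; apply: imset_f; rewrite inE.
  case/imsetP=> a'; rewrite inE e => lt' /perm_inj eq_a.
  by move: le2; rewrite eq_a leqNgt lt'.
move=> eq_head a1 a2; rewrite /splice_fun.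
case: ltnP => l1; case: ltnP => l2; try exact: perm_inj.
- by move=> e; move: (cross _ _ _ _ eq_head l1 l2); rewrite e eqxx.
- by move=> e; move: (cross _ _ _ _ eq_head l2 l1); rewrite e eqxx.
Qed.

Lemma head_set_mono g k m : (k <= m)%N -> head_set g k \subset head_set g m.
Proof.
move=> le_km; apply: imsetS; apply/subsetP=> a; rewrite !inE => lt_ak.
exact: leq_trans le_km.
Qed.

Lemma perm_eq_off1 g h (b : nat) :
  (forall a : 'I_n, val a != b -> g a = h a) -> g = h.
Proof.
move=> eq_off; apply/permP=> a; case: (eqVneq (val a) b) => [a_b | ]; last exact: eq_off.
set c := (h^-1)%g (g a); have hc : h c = g a by rewrite permKV.
case: (eqVneq (val c) b) => [c_b | c_nb].
  by rewrite -hc; congr (h _); apply: val_inj; rewrite a_b c_b.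
have c_a : c = a := perm_inj (etrans (eq_off c c_nb) hc).
by move: c_nb; rewrite c_a a_b eqxx.
Qed.

(* The splice of g and h at k (meaningful when their head sets agree). *)
Definition splice g h k : {perm 'I_n} :=
  if injectiveP (splice_fun g h k) is ReflectT inj then perm inj else g.

Section SpliceFacts.
Variables (g h : {perm 'I_n}) (k : nat).
Hypothesis eq_head : head_set g k = head_set h k.

Lemma spliceE (a : 'I_n) : splice g h k a = if (a < k)%N then g a else h a.
Proof.
rewrite /splice; case: (injectiveP (splice_fun g h k)) => [inj|not_inj].
  by rewrite permE.
by case: not_inj; apply: splice_fun_inj.
Qed.

Lemma splice_lt (a : 'I_n) : (a < k)%N -> splice g h k a = g a.
Proof. by rewrite spliceE => ->. Qed.

Lemma splice_ge (a : 'I_n) : (k <= a)%N -> splice g h k a = h a.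
Proof. by rewrite spliceE leqNgt => /negPf ->. Qed.

Lemma head_set_splice_le m : (m <= k)%N -> head_set (splice g h k) m = head_set g m.
Proof.
move=> le_mk; apply: eq_in_imset => a; rewrite inE => lt_am.
by rewrite splice_lt // (leq_trans lt_am).
Qed.

Lemma head_set_splice_ge m : (k <= m)%N -> head_set (splice g h k) m = head_set h m.
Proof.
move=> le_km.
have head_sub u : head_set u k \subset head_set u m by apply: head_set_mono.
apply/eqP; rewrite eqEsubset; apply/andP; split; apply/subsetP=> b /imsetP[a].
- rewrite inE => lt_am {b}->; case: (ltnP a k) => [lt_ak | le_ka].
    rewrite splice_lt //; apply: (subsetP (head_sub h)).
    by rewrite -eq_head; apply: imset_f; rewrite inE.
  by rewrite splice_ge //; apply: imset_f; rewrite inE.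
- rewrite inE => lt_am {b}->; case: (ltnP a k) => [lt_ak | le_ka].
    have : h a \in head_set g k by rewrite eq_head; apply: imset_f; rewrite inE.
    case/imsetP=> a'; rewrite inE => lt_a'k ->.
    by rewrite -(splice_lt lt_a'k); apply: imset_f; rewrite inE (leq_trans lt_a'k).
  by rewrite -(splice_ge le_ka); apply: imset_f; rewrite inE.
Qed.
(* Splicing at k <= 1 or k >= n - 1 changes nothing but one value, hence
   nothing at all. *)
Lemma splice_small : (k <= 1)%N -> splice g h k = h.
Proof.
move=> le_k1; apply: (@perm_eq_off1 _ _ 0) => a nz_a; apply: splice_ge.
by apply: leq_trans le_k1 _; rewrite lt0n.
Qed.

Lemma splice_large : (n.-1 <= k)%N -> splice g h k = g.
Proof.
move=> le_k; apply: (@perm_eq_off1 _ _ n.-1) => a ne_a; apply: splice_lt.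
apply: leq_trans le_k.
by rewrite ltn_neqAle ne_a -ltnS (ltn_predK (ltn_ord a)) ltn_ord.
Qed.

End SpliceFacts.

Lemma splice_involutive g h k : head_set g k = head_set h k ->
  splice (splice g h k) (splice h g k) k = g.
Proof.
move=> eq_head.
have eq_head' : head_set (splice g h k) k = head_set (splice h g k) k.
  by rewrite head_set_splice_le // head_set_splice_le // eq_head.
apply/permP=> a; case: (ltnP a k) => [lt_ak | le_ka].
  by rewrite splice_lt // splice_lt.
by rewrite splice_ge // splice_ge.
Qed.
End Splicing.

Section Probability.
Variables (R : realFieldType) (n : nat).
Implicit Types (p : {perm 'I_n} -> R) (E F Y : pred {perm 'I_n}).

(* Conditional probability P(E | Y), with the convention x / 0 = 0. *)
Definition cPr p E Y : R := Pr p [predI E & Y] / Pr p Y.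

(* Conditional independence of A and B given Y, in the multiplied-out form
   P(A B Y) P(Y) = P(A Y) P(B Y), which is meaningful even when P(Y) = 0. *)
Definition indep_given p Y (A B : pred {perm 'I_n}) : Prop :=
  Pr p [predI [predI A & B] & Y] * Pr p Y = Pr p [predI A & Y] * Pr p [predI B & Y].

Lemma Pr_ext p E F : E =1 F -> Pr p E = Pr p F.
Proof. by move=> eqEF; apply: eq_bigl. Qed.

Lemma Pr_ge0 p E : (forall g, 0 <= p g) -> 0 <= Pr p E.
Proof. by move=> p_ge0; apply: sumr_ge0. Qed.

Lemma Pr_le p E F : (forall g, 0 <= p g) -> (forall g, E g -> F g) -> Pr p E <= Pr p F.
Proof.
move=> p_ge0 sEF; rewrite /Pr [X in X <= _]big_mkcond [X in _ <= X]big_mkcond /=.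
apply: ler_sum => g _.
by case Eg: (E g); [rewrite sEF | case: (F g)].
Qed.

Lemma cPr_ext p E E' Y Y' : E =1 E' -> Y =1 Y' -> cPr p E Y = cPr p E' Y'.
Proof.
move=> eqE eqY; rewrite /cPr (Pr_ext p eqY); congr (_ / _).
by apply: Pr_ext => g; rewrite /= !unfold_in /= eqE eqY.
Qed.

Lemma Pr_mul p E F :
  Pr p E * Pr p F =
  \sum_(u : {perm 'I_n} * {perm 'I_n})
     ((if E u.1 then p u.1 else 0) * (if F u.2 then p u.2 else 0)).
Proof.
rewrite /Pr [\sum_(s | E s) _]big_mkcond [\sum_(s | F s) _]big_mkcond.
by rewrite big_distrlr pair_big.
Qed.

Lemma Pr_pinv p E : Pr (pinv p) E = Pr p [pred g | E (g^-1)%g].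
Proof.
rewrite /Pr /pinv (reindex_inj (@invg_inj _)) /=.
by apply: eq_bigr => g _; rewrite invgK.
Qed.

End Probability.

Section ChainRule.
Variables (R : realFieldType) (n : nat) (p : {perm 'I_n} -> R).
Hypotheses (p_ge0 : forall g, 0 <= p g) (p_Ldec : L_decomposable p).
Implicit Types g h : {perm 'I_n}.

Definition agree_below g (m : nat) : pred {perm 'I_n} :=
  [pred s : {perm 'I_n} | [forall a : 'I_n, (a < m)%N ==> (s a == g a)]].

Definition head_prob g m : R := Pr p (agree_below g m).

(* P(Pi(k) = g(k) | Pi{0:k-1} = g{0:k-1}): by L-decomposability, the factor
   by which the chain rule extends head_prob g k to head_prob g k.+1. *)
Definition step_factor (k : 'I_n) g : R :=
  cPr p [pred s : {perm 'I_n} | s k == g k]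
      [pred s : {perm 'I_n} | head_set s k == head_set g k].

Definition chain_factor (m : nat) g : R :=
  if insub m is Some k then step_factor k g else 1.

Definition tail_factor (k : nat) g : R := \prod_(k <= m < n.-1) chain_factor m g.

(* One step of the chain rule, given by L-decomposability at k (when the
   conditioning event is null, both sides vanish). *)
Lemma head_prob_succ (k : 'I_n) g : (2 <= k)%N -> (k <= n - 2)%N ->
  head_prob g k.+1 = head_prob g k * step_factor k g.
Proof.
move=> le2k lekn; have ratio_eq := @p_Ldec k g le2k lekn; cbv zeta in ratio_eq.
have -> : head_prob g k.+1 =
    Pr p [predI [pred s : {perm 'I_n} | s k == g k] & agree_below g k].
  by apply: Pr_ext => s; rewrite /= !unfold_in /agree_below /= forall_ltS andbC.
have [pos_head | ] := ltrP 0 (head_prob g k).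
  by rewrite /step_factor /cPr -ratio_eq // mulrC divfK ?gt_eqF.
rewrite le_eqVlt ltNge Pr_ge0 // orbF => /eqP null_head.
rewrite null_head mul0r; apply/eqP; rewrite eq_le Pr_ge0 // andbT -null_head.
by apply: Pr_le => // s /andP[].
Qed.

Lemma head_prob_telescope g (k M : nat) : (2 <= k <= M)%N -> (M <= n.-1)%N ->
  head_prob g M = head_prob g k * \prod_(k <= m < M) chain_factor m g.
Proof.
case/andP=> le2k; elim: M => [|M IH] leM leMn; first by exfalso; lia.
rewrite leq_eqVlt in leM; case/orP: leM => [/eqP <- | ltkM].
  by rewrite big_geq ?mulr1.
have ltMn : (M < n)%N by lia.
rewrite big_nat_recr //= mulrA -IH ?(ltnW leMn) //.
by rewrite (@head_prob_succ (Ordinal ltMn)) /=; [rewrite /chain_factor insubT | lia | lia].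
Qed.

(* All but the last value determine the permutation. *)
Lemma head_prob_last g : head_prob g n.-1 = p g.
Proof.
rewrite /head_prob /Pr (eq_bigl (pred1 g)) ?big_pred1_eq // => s /=.
apply/forallP/eqP=> [agree | ->]; last by move=> a; rewrite eqxx implybT.
apply: (@perm_eq_off1 _ _ _ n.-1) => a ne_a; apply/eqP; apply: (implyP (agree a)).
by rewrite ltn_neqAle ne_a -ltnS (ltn_predK (ltn_ord a)) ltn_ord.
Qed.

(* The chain-rule factorization p(g) = P(head of g) * (tail factor), where the
   tail factor only depends on the head set and on the values from k on. *)
Lemma p_factor g k : (2 <= k <= n.-1)%N -> p g = head_prob g k * tail_factor k g.
Proof.
move=> /andP[le2k lekn]; rewrite -head_prob_last.
by apply: head_prob_telescope; rewrite ?le2k ?lekn.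
Qed.

Lemma head_prob_ext g h m :
  (forall a : 'I_n, (a < m)%N -> g a = h a) -> head_prob g m = head_prob h m.
Proof.
move=> eq_gh; apply: Pr_ext => s /=; apply: eq_forallb => a.
by case: (ltnP a m) => // lt_am; rewrite eq_gh.
Qed.

Lemma chain_factor_ext g h m :
  (forall a : 'I_n, val a = m -> g a = h a) -> head_set g m = head_set h m ->
  chain_factor m g = chain_factor m h.
Proof.
move=> eq_at eq_head; rewrite /chain_factor; case: insubP => // k _ val_k.
by rewrite -val_k in eq_head; rewrite /step_factor eq_at // eq_head.
Qed.

Lemma splice_exchange g h k : head_set g k = head_set h k ->
  p g * p h = p (splice g h k) * p (splice h g k).
Proof.
move=> eq_head; have eq_head' := esym eq_head.
case: (leqP k 1) => [lek1 | lt1k].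
  by rewrite splice_small // splice_small // mulrC.
case: (leqP n.-1 k) => [lenk | ltkn].
  by rewrite splice_large // splice_large.
have range_k : (2 <= k <= n.-1)%N by rewrite lt1k ltnW.
have head_splice u v : head_set u k = head_set v k ->
    head_prob (splice u v k) k = head_prob u k.
  by move=> eq_uv; apply: head_prob_ext => a; apply: splice_lt.
have tail_splice u v : head_set u k = head_set v k ->
    tail_factor k (splice u v k) = tail_factor k v.
  move=> eq_uv; apply: eq_big_nat => m /andP[lekm _].
  apply: chain_factor_ext => [a val_a | ]; first by rewrite splice_ge // val_a.
  exact: head_set_splice_ge.
rewrite !(p_factor _ range_k) !head_splice // !tail_splice //.
by rewrite mulrACA [RHS]mulrACA [tail_factor k h * _]mulrC.
Qed.

End ChainRule.

Section SpliceIndependence.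
Variables (R : realFieldType) (n : nat) (p : {perm 'I_n} -> R) (k : nat).
Implicit Types (g h : {perm 'I_n}) (A B : pred {perm 'I_n}).

Definition depends_below A : Prop :=
  forall g h, (forall a : 'I_n, (a < k)%N -> g a = h a) -> A g = A h.
Definition depends_from B : Prop :=
  forall g h, (forall a : 'I_n, (k <= a)%N -> g a = h a) -> B g = B h.

Variable Y : pred {perm 'I_n}.
Hypotheses (Y_head : forall g h, Y g -> Y h -> head_set g k = head_set h k)
  (Y_splice : forall g h, Y g -> Y h -> Y (splice g h k))
  (p_exchange : forall g h, head_set g k = head_set h k ->
     p g * p h = p (splice g h k) * p (splice h g k)).

(* Exchanging heads between pairs of Y is a measure-preserving involution of
   Y x Y, which decouples the head events from the tail events given Y. *)
Lemma splice_indep A B : depends_below A -> depends_from B -> indep_given p Y A B.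
Proof.
move=> A_head B_tail.
pose swap (u : {perm 'I_n} * {perm 'I_n}) :=
  if Y u.1 && Y u.2 then (splice u.1 u.2 k, splice u.2 u.1 k) else u.
have swapK : involutive swap.
  move=> [g h]; rewrite /swap /=.
  case: (boolP (Y g && Y h)) => [/andP[Yg Yh] | /negPf-> //].
  have head_gh := Y_head Yg Yh.
  by rewrite !Y_splice //= (splice_involutive head_gh) (splice_involutive (esym head_gh)).
rewrite /indep_given !Pr_mul [RHS](reindex_inj (inv_inj swapK)) /=.
apply: eq_bigr => -[g h] _; rewrite /swap /=.
case: (boolP (Y g && Y h)) => [/andP[Yg Yh] | not_YY] /=; last first.
  by move: not_YY; rewrite !unfold_in /= !unfold_in; case: (Y g); case: (Y h);
    rewrite ?andbF ?mulr0 ?mul0r.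
have head_gh := Y_head Yg Yh.
rewrite !unfold_in /= !unfold_in /= !Y_splice // Yg Yh !andbT.
rewrite (@A_head (splice g h k) g); last by move=> a; apply: splice_lt.
rewrite (@B_tail (splice h g k) g); last by move=> a; apply: splice_ge; rewrite head_gh.
by case: (A g); case: (B g); rewrite /= ?mul0r ?mulr0 // (p_exchange head_gh).
Qed.

End SpliceIndependence.

Section ConsecutivePartitions.
Variables (n s : nat) (kap : nat -> nat).
Hypothesis kap_part : consec_part n s kap.

Lemma part_mono i j : (i <= j <= s)%N -> (kap i <= kap j)%N.
Proof.
case: kap_part => _ [_ kap_lt] /andP[].
elim: j => [|j IH]; first by rewrite leqn0 => /eqP->.
rewrite leq_eqVlt ltnS => /orP[/eqP -> // | le_ij] lt_js.
by apply: leq_trans (IH le_ij (ltnW lt_js)) (ltnW (kap_lt (Ordinal lt_js))).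
Qed.

Lemma block_lt i0 i (a : 'I_n) :
  (i < i0 <= s)%N -> a \in block n kap i -> (a < kap i0)%N.
Proof.
case/andP=> lt_i le_i0; rewrite inE => /andP[_ lt_a].
by apply: leq_trans lt_a _; apply: part_mono; rewrite lt_i.
Qed.

Lemma block_ge i0 i (a : 'I_n) :
  (i0 <= i < s)%N -> a \in block n kap i -> (kap i0 <= a)%N.
Proof.
case/andP=> le_i lt_is; rewrite inE => /andP[le_a _].
by apply: leq_trans _ le_a; apply: part_mono; rewrite le_i ltnW.
Qed.

Lemma below_blocks i0 (a : 'I_n) : (i0 <= s)%N ->
  (a < kap i0)%N = [exists i : 'I_s, (i < i0)%N && (a \in block n kap i)].
Proof.
elim: i0 => [|i0 IH] le_i0.
  case: kap_part => -> _; apply/esym/existsP=> -[i].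
  by rewrite ltn0.
apply/idP/existsP=> [lt_a | [i /andP[lt_i a_i]]]; last first.
  by apply: block_lt a_i; rewrite lt_i le_i0.
case: (ltnP a (kap i0)) => [lt_a0 | ge_a0].
  have /existsP[i /andP[lt_i a_i]] : [exists i : 'I_s, (i < i0)%N && (a \in block n kap i)].
    by rewrite -IH // (ltnW le_i0).
  by exists i; rewrite a_i andbT ltnS (ltnW lt_i).
by exists (Ordinal le_i0); rewrite ltnSn inE ge_a0.
Qed.

Lemma head_set_blocks i0 (g : {perm 'I_n}) : (i0 <= s)%N ->
  head_set g (kap i0) = \bigcup_(i : 'I_s | (i < i0)%N) g @: block n kap i.
Proof.
move=> le_i0; apply/setP=> b; apply/imsetP/bigcupP=> [[a] | [i lt_i /imsetP[a a_i ->]]].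
  rewrite inE below_blocks // => /existsP[i /andP[lt_i a_i]] ->.
  by exists i; rewrite ?imset_f.
by exists a; rewrite // inE (block_lt (i := i)) ?lt_i.
Qed.

End ConsecutivePartitions.

Lemma imset_invg n (g : {perm 'I_n}) (B : {set 'I_n}) : (g^-1)%g @: B = g @^-1: B.
Proof. by rewrite -preim_permV invgK. Qed.

Definition marginal_event n s t (kap lam : nat -> nat)
    (y1 : 'I_s -> {set 'I_n}) (y2 : 'I_t -> {set 'I_n}) : simpl_pred {perm 'I_n} :=
  [pred g : {perm 'I_n} | [forall i : 'I_s, g @: block n kap i == y1 i] &&
            [forall j : 'I_t, (g^-1)%g @: block n lam j == y2 j]].

Lemma marginal_event_inv n s t kap lam (y1 : 'I_s -> {set 'I_n})
    (y2 : 'I_t -> {set 'I_n}) (g : {perm 'I_n}) :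
  marginal_event lam kap y2 y1 (g^-1)%g = marginal_event kap lam y1 y2 g.
Proof. by rewrite /= invgK andbC. Qed.

Section MarginalEvent.
Variables (n s t : nat) (kap lam : nat -> nat).
Variables (y1 : 'I_s -> {set 'I_n}) (y2 : 'I_t -> {set 'I_n}).
Hypothesis kap_part : consec_part n s kap.
Let Y := marginal_event kap lam y1 y2.
Implicit Types g h : {perm 'I_n}.

Lemma marginal_head i0 g h : (i0 <= s)%N -> Y g -> Y h ->
  head_set g (kap i0) = head_set h (kap i0).
Proof.
move=> le_i0 /andP[/forallP g_rows _] /andP[/forallP h_rows _].
rewrite !(head_set_blocks kap_part) //; apply: eq_bigr => i _.
by rewrite (eqP (g_rows i)) (eqP (h_rows i)).
Qed.

Lemma marginal_splice i0 g h : (i0 <= s)%N -> Y g -> Y h -> Y (splice g h (kap i0)).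
Proof.
move=> le_i0 Yg Yh; have head_gh := marginal_head le_i0 Yg Yh.
case/andP: Yg => /forallP g_rows /forallP g_cols.
case/andP: Yh => /forallP h_rows /forallP h_cols.
apply/andP; split; apply/forallP; [move=> i | move=> j].
  case: (ltnP i i0) => [lt_i | ge_i].
    rewrite -(eqP (g_rows i)); apply/eqP/eq_in_imset=> a a_i; apply: splice_lt => //.
    by apply: (block_lt kap_part) a_i; rewrite lt_i le_i0.
  rewrite -(eqP (h_rows i)); apply/eqP/eq_in_imset=> a a_i; apply: splice_ge => //.
  by apply: (block_ge kap_part) a_i; rewrite ge_i ltn_ord.
have preim_gh : g @^-1: block n lam j = h @^-1: block n lam j.
  by rewrite -!imset_invg (eqP (g_cols j)) (eqP (h_cols j)).
rewrite -(eqP (g_cols j)) !imset_invg; apply/eqP/setP=> a; rewrite !inE.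
case: (ltnP a (kap i0)) => [lt_a | ge_a]; first by rewrite splice_lt.
by rewrite splice_ge //; move/setP: preim_gh => /(_ a); rewrite !inE => ->.
Qed.

End MarginalEvent.

Section Inversion.
Variables (R : realFieldType) (n : nat).
Implicit Types (p : {perm 'I_n} -> R) (Y A B : pred {perm 'I_n}).

Lemma indep_given_ext p Y Y' A A' B B' : Y =1 Y' -> A =1 A' -> B =1 B' ->
  indep_given p Y A B -> indep_given p Y' A' B'.
Proof.
move=> eqY eqA eqB.
have eqI E E' : E =1 E' -> Pr p [predI E & Y] = Pr p [predI E' & Y'].
  by move=> eqE; apply: Pr_ext => g; rewrite /= ?unfold_in /= ?unfold_in /= eqE eqY.
have eqAB : [predI A & B] =1 [predI A' & B'].
  by move=> g; rewrite /= ?unfold_in /= ?unfold_in /= eqA eqB.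
by rewrite /indep_given (Pr_ext p eqY) (eqI _ _ eqA) (eqI _ _ eqB) (eqI _ _ eqAB).
Qed.

Lemma indep_given_pinv p Y A B : indep_given (pinv p) Y A B ->
  indep_given p [pred g | Y (g^-1)%g] [pred g | A (g^-1)%g] [pred g | B (g^-1)%g].
Proof. by rewrite /indep_given !Pr_pinv. Qed.

End Inversion.

Lemma rows_indep (R : realFieldType) n s t (kap lam : nat -> nat) (y1 : 'I_s -> {set 'I_n})
    (y2 : 'I_t -> {set 'I_n}) (p : {perm 'I_n} -> R) i0 (A B : pred {perm 'I_n}) :
  (forall g, 0 <= p g) -> L_decomposable p -> consec_part n s kap -> (i0 <= s)%N ->
  depends_below (kap i0) A -> depends_from (kap i0) B ->
  indep_given p (marginal_event kap lam y1 y2) A B.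
Proof.
move=> p_ge0 p_Ldec kap_part le_i0; apply: splice_indep.
- by move=> g h; apply: marginal_head.
- by move=> g h; apply: marginal_splice.
- by move=> g h; apply: splice_exchange.
Qed.

Lemma cols_indep (R : realFieldType) n s t (kap lam : nat -> nat) (y1 : 'I_s -> {set 'I_n})
    (y2 : 'I_t -> {set 'I_n}) (p : {perm 'I_n} -> R) j0 (A B : pred {perm 'I_n}) :
  (forall g, 0 <= p g) -> L_decomposable (pinv p) -> consec_part n t lam -> (j0 <= t)%N ->
  depends_below (lam j0) [pred g | A (g^-1)%g] ->
  depends_from (lam j0) [pred g | B (g^-1)%g] ->
  indep_given p (marginal_event kap lam y1 y2) A B.
Proof.
move=> p_ge0 pinv_Ldec lam_part le_j0 A_head B_tail.
have pinv_ge0 g : 0 <= pinv p g by apply: p_ge0.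
move: (rows_indep kap y2 y1 pinv_ge0 pinv_Ldec lam_part le_j0 A_head B_tail).
move/indep_given_pinv.
by apply: indep_given_ext => g; rewrite /= invgK // andbC.
Qed.

Section ProductRule.
Variables (R : realFieldType) (n : nat) (p : {perm 'I_n} -> R) (Y : pred {perm 'I_n}).
Hypothesis pos_Y : 0 < Pr p Y.

Lemma cPr_indep (A B : pred {perm 'I_n}) : indep_given p Y A B ->
  cPr p [predI A & B] Y = cPr p A Y * cPr p B Y.
Proof.
move=> indep_AB; rewrite /cPr mulrACA -invfM -indep_AB invfM mulrA mulfK //.
by rewrite gt_eqF.
Qed.

Variables (u : nat) (F : 'I_u -> pred {perm 'I_n}).

Definition meet_below (m : nat) : pred {perm 'I_n} :=
  [pred g | [forall i : 'I_u, (i < m)%N ==> F i g]].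

Hypothesis F_indep :
  forall m (lt_mu : (m < u)%N), indep_given p Y (meet_below m) (F (Ordinal lt_mu)).

Lemma cPr_meet_below m : (m <= u)%N ->
  cPr p (meet_below m) Y = \prod_(i : 'I_u | (i < m)%N) cPr p (F i) Y.
Proof.
elim: m => [_ | m IH lt_mu].
  rewrite big_pred0 // /cPr (@Pr_ext _ _ p _ Y) ?divff ?gt_eqF // => g.
  by rewrite /= !unfold_in /= (_ : [forall i, _] = true) //; apply/forallP.
pose m' := Ordinal lt_mu.
rewrite (cPr_ext p (E' := [predI meet_below m & F m']) (Y' := Y)) //; last first.
  by move=> g; rewrite /= !unfold_in /meet_below /= (forall_ltS _ m').
rewrite (cPr_indep (F_indep lt_mu)) IH ?(ltnW lt_mu) // [RHS](bigD1 m') //=.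
rewrite mulrC; congr (_ * _); apply: eq_bigl => i.
by rewrite -val_eqE /= ltnS; lia.
Qed.

Lemma cPr_meet : cPr p [pred g | [forall i, F i g]] Y = \prod_i cPr p (F i) Y.
Proof.
rewrite (cPr_ext p (E' := meet_below u) (Y' := Y)) ?cPr_meet_below //.
  by apply: eq_bigl => i; rewrite ltn_ord.
by move=> g; apply: eq_forallb => i; rewrite ltn_ord.
Qed.

End ProductRule.

Section GraphBlocks.
Variables (n : nat) (kap lam : nat -> nat).
Implicit Types g h : {perm 'I_n}.

Lemma graph_block_agree i j g h :
  (forall a, a \in block n kap i -> g a = h a) ->
  graph_block kap lam i j g = graph_block kap lam i j h.
Proof.
move=> eq_gh; apply/setP=> -[a b]; rewrite !inE /=.
by case a_i: (kap i <= a < kap i.+1)%N; rewrite //= eq_gh // inE a_i.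
Qed.

Definition swap_pairs (X : {set 'I_n * 'I_n}) : {set 'I_n * 'I_n} :=
  [set z | (z.2, z.1) \in X].

Lemma swap_pairsK : involutive swap_pairs.
Proof. by move=> X; apply/setP=> -[a b]; rewrite !inE. Qed.

Lemma graph_block_inv i j g :
  graph_block kap lam i j (g^-1)%g = swap_pairs (graph_block lam kap j i g).
Proof.
apply/setP=> -[a b]; rewrite !inE /= andbCA; congr (_ && (_ && _)).
by apply/eqP/eqP=> [<- | <-]; rewrite ?permKV ?permK.
Qed.

End GraphBlocks.

Lemma graph_block_agree_below n (kap : nat -> nat) {lam : nat -> nat} {j : nat} s i0 i
    (g h : {perm 'I_n}) : consec_part n s kap -> (i < i0 <= s)%N ->
  (forall a : 'I_n, (a < kap i0)%N -> g a = h a) ->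
  graph_block kap lam i j g = graph_block kap lam i j h.
Proof.
move=> kap_part lt_i eq_gh; apply: graph_block_agree => a a_i.
by apply: eq_gh; apply: (block_lt kap_part) a_i.
Qed.

Lemma graph_block_agree_from n (kap : nat -> nat) {lam : nat -> nat} {j : nat} s i0 i
    (g h : {perm 'I_n}) : consec_part n s kap -> (i0 <= i < s)%N ->
  (forall a : 'I_n, (kap i0 <= a)%N -> g a = h a) ->
  graph_block kap lam i j g = graph_block kap lam i j h.
Proof.
move=> kap_part le_i eq_gh; apply: graph_block_agree => a a_i.
by apply: eq_gh; apply: (block_ge kap_part) a_i.
Qed.

(* Rows are split off one at a time by
   rows_indep, and within a row the columns by cols_indep. *)
Lemma bidecomposable_cond_indep (R : realFieldType) n (p : {perm 'I_n} -> R)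
    s (kap : nat -> nat) t (lam : nat -> nat) :
  (forall g, 0 <= p g) -> bi_decomposable p ->
  consec_part n s kap -> consec_part n t lam -> cond_indep_blocks p s kap t lam.
Proof.
move=> p_ge0 [p_Ldec pinv_Ldec] kap_part lam_part y1 y2 x EY EX pos_Y.
pose C (i : 'I_s) (j : 'I_t) := [pred g : {perm 'I_n} | graph_block kap lam i j g == x i j].
pose Row (i : 'I_s) := [pred g : {perm 'I_n} | [forall j, C i j g]].
change (cPr p EX EY = \prod_i \prod_j cPr p (C i j) EY).
rewrite (cPr_ext p (E' := [pred g | [forall i, Row i g]]) (Y' := EY)) // (cPr_meet pos_Y).
  apply: eq_bigr => i _; apply: cPr_meet => // m lt_mt.
  apply: (cols_indep kap y1 y2 p_ge0 pinv_Ldec lam_part (ltnW lt_mt)) => g h eq_gh /=.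
    apply: eq_forallb => j; case: (ltnP j m) => //= lt_jm.
    rewrite !graph_block_inv; congr (swap_pairs _ == _).
    by apply: (graph_block_agree_below lam_part) eq_gh; rewrite lt_jm (ltnW lt_mt).
  rewrite !graph_block_inv; congr (swap_pairs _ == _).
  by apply: (graph_block_agree_from lam_part) eq_gh; rewrite leqnn.
move=> m lt_ms.
apply: (rows_indep lam y1 y2 p_ge0 p_Ldec kap_part (ltnW lt_ms)) => g h eq_gh /=.
  apply: eq_forallb => i; case: (ltnP i m) => //= lt_im.
  apply: eq_forallb => j; congr (_ == _).
  by apply: (graph_block_agree_below kap_part) eq_gh; rewrite lt_im (ltnW lt_ms).
apply: eq_forallb => j; congr (_ == _).
by apply: (graph_block_agree_from kap_part) eq_gh; rewrite leqnn.
Qed.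

Section Conditioning.
Variables (R : realFieldType) (n : nat) (p : {perm 'I_n} -> R).
Hypothesis p_ge0 : forall g, 0 <= p g.
Variables (V : finType) (X : {perm 'I_n} -> V) (Y E : pred {perm 'I_n}).

Lemma Pr_partition (Z : pred {perm 'I_n}) (T : pred V) :
  Pr p [pred g | Z g && T (X g)] = \sum_(v | T v) Pr p [pred g | Z g && (X g == v)].
Proof.
rewrite /Pr (partition_big X T) => [|g /andP[] //].
apply: eq_bigr => v Tv; apply: eq_bigl => g /=.
by case: eqP => [-> | _]; rewrite ?Tv ?andbT ?andbF.
Qed.

Hypothesis E_indep_X : forall v,
  cPr p [pred g | E g && (X g == v)] Y = cPr p E Y * cPr p [pred g | X g == v] Y.

Lemma cPr_partition (Z : pred {perm 'I_n}) (T : pred V) :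
  cPr p [pred g | Z g && T (X g)] Y =
  \sum_(v | T v) cPr p [pred g | Z g && (X g == v)] Y.
Proof.
rewrite /cPr -mulr_suml; congr (_ / _).
rewrite (@Pr_ext _ _ p _ [pred g | [predI Z & Y] g && T (X g)]) ?Pr_partition.
  by apply: eq_bigr => v _; apply: Pr_ext => g; rewrite /= !unfold_in /= andbAC.
by move=> g; rewrite /= !unfold_in /= andbAC.
Qed.

Lemma indep_of_X_events (T : pred V) :
  cPr p [pred g | E g && T (X g)] Y = cPr p E Y * cPr p [pred g | T (X g)] Y.
Proof.
rewrite cPr_partition (eq_bigr _ (fun v _ => E_indep_X v)) -mulr_sumr.
by rewrite [cPr _ [pred g | T (X g)] _](cPr_partition predT).
Qed.

Lemma cPr_condition_indep (A : pred {perm 'I_n}) (T : pred V) :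
  (forall g, A g = T (X g)) -> 0 < Pr p [predI E & Y] ->
  cPr p A [predI E & Y] = cPr p A Y.
Proof.
move=> A_X pos_EY; have nz_EY : Pr p [predI E & Y] != 0 by rewrite gt_eqF.
have nz_Y : Pr p Y != 0.
  by rewrite gt_eqF // (lt_le_trans pos_EY) // Pr_le // => g /andP[].
have eq_ET : Pr p [predI A & ([predI E & Y] : pred _)] =
              Pr p [predI [pred g | E g && T (X g)] & Y].
  by apply: Pr_ext => g; rewrite /= !unfold_in /= A_X andbCA andbA.
have eq_T : Pr p [predI A & Y] = Pr p [predI [pred g | T (X g)] & Y].
  by apply: Pr_ext => g; rewrite /= !unfold_in /= A_X.
have := indep_of_X_events T; rewrite /cPr mulrACA -invfM => /eqP.
rewrite eqr_div ?mulf_neq0 // mulrA => /eqP /(mulIf nz_Y) indep_ET.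
by apply/eqP; rewrite /cPr eqr_div // eq_ET eq_T indep_ET mulrC.
Qed.

End Conditioning.

Section TwoBlocks.
Variables (n : nat) (k : 'I_n).
Implicit Types g h : {perm 'I_n}.

(* The partition {0..k-1} | {k..n-1} and the trivial partition. *)
Definition cut_at : nat -> nat := nth n [:: 0%N; val k].
Definition no_cut : nat -> nat := nth n [:: 0%N].

Lemma cut_at_part : (0 < k)%N -> consec_part n 2 cut_at.
Proof. by move=> pos_k; do 2!split=> //; case=> [[|[|]]] //= _; rewrite ltn_ord. Qed.

Lemma no_cut_part : consec_part n 1 no_cut.
Proof. by do 2!split=> //; case=> [[|]] //= _; apply: leq_ltn_trans (ltn_ord k). Qed.

Definition head_block g := graph_block cut_at no_cut 0 0 g.
Definition tail_block g := graph_block cut_at no_cut 1 0 g.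

Lemma head_blockE g h : (head_block g == head_block h) = agree_below h k g.
Proof.
apply/eqP/forallP=> [eq_gh a | agree].
  apply/implyP=> lt_ak; have : (a, g a) \in head_block g.
    by rewrite !inE /= lt_ak ltn_ord eqxx.
  by rewrite eq_gh !inE => /and3P[_ _ /eqP ->].
apply: graph_block_agree => a; rewrite inE => /= lt_ak.
by apply/eqP; apply: (implyP (agree a)).
Qed.

Lemma tail_blockE g (b : 'I_n) : ((k, b) \in tail_block g) = (g k == b).
Proof. by rewrite !inE /= leqnn !ltn_ord. Qed.

Lemma marginal_cut (S : {set 'I_n}) g :
  marginal_event cut_at no_cut (fun i : 'I_2 => if i == ord0 then S else ~: S)
    (fun _ : 'I_1 => [set: 'I_n]) g = (head_set g k == S).
Proof.
have head_g : g @: block n cut_at 0 = head_set g k.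
  by apply/setP=> b; apply/imsetP/imsetP=> -[a a_in ->]; exists a; move: a_in; rewrite ?inE.
have block1 : block n cut_at 1 = ~: block n cut_at 0.
  by apply/setP=> a; rewrite !inE /= ltn_ord andbT leqNgt.
have tail_g : g @: block n cut_at 1 = ~: head_set g k.
  by rewrite -head_g block1 -!preim_permV preimsetC.
have cols_g : [forall j : 'I_1, (g^-1)%g @: block n no_cut j == [set: 'I_n]].
  apply/forallP=> j; rewrite (ord1 j) imset_invg.
  by apply/eqP/setP=> a; rewrite !inE /= ltn_ord.
rewrite /= cols_g andbT.
apply/forallP/eqP=> [rows | <-]; first by rewrite -head_g; apply/eqP; apply: (rows ord0).
by case=> [[|[|]]] //= lt_i; rewrite ?head_g ?tail_g.
Qed.

Lemma cond_indep_cut (R : realFieldType) (p : {perm 'I_n} -> R)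
    (y1 : 'I_2 -> {set 'I_n}) (y2 : 'I_1 -> {set 'I_n}) x0 x1 :
  cond_indep_blocks p 2 cut_at 1 no_cut ->
  let Y := marginal_event cut_at no_cut y1 y2 in 0 < Pr p Y ->
  cPr p [pred g | (head_block g == x0) && (tail_block g == x1)] Y =
  cPr p [pred g | head_block g == x0] Y * cPr p [pred g | tail_block g == x1] Y.
Proof.
move=> indep Y pos_Y; pose x (i : 'I_2) (j : 'I_1) := if i == ord0 then x0 else x1.
have := indep y1 y2 x pos_Y; rewrite !big_ord_recl !big_ord0 !mulr1.
move=> <-; apply: cPr_ext => // g /=.
apply/andP/forallP=> [[head_g tail_g] i | rows].
  by apply/forallP=> j; rewrite (ord1 j); case: i => [[|[|]]].
exact: (conj (forallP (rows ord0) ord0) (forallP (rows (lift ord0 ord0)) ord0)).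
Qed.

End TwoBlocks.

Lemma cond_indep_Ldec (R : realFieldType) n (p : {perm 'I_n} -> R) :
  (forall g, 0 <= p g) ->
  (forall s kap t lam, consec_part n s kap -> consec_part n t lam ->
     cond_indep_blocks p s kap t lam) ->
  L_decomposable p.
Proof.
move=> p_ge0 all_indep k pi le2k _ A B C pos_B.
have indep := all_indep _ _ _ _ (cut_at_part (ltnW le2k)) (no_cut_part k).
pose y1 (i : 'I_2) := if i == ord0 then head_set pi k else ~: head_set pi k.
pose Y : pred {perm 'I_n} :=
  marginal_event (cut_at k) (no_cut n) y1 (fun _ : 'I_1 => [set: 'I_n]).
pose E : pred {perm 'I_n} := [pred g | head_block k g == head_block k pi].
have Y_C : Y =1 C by move=> g; apply: marginal_cut.
have B_EY : B =1 [predI E & Y].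
  move=> g; have Y_g : Y g = (head_set g k == head_set pi k) by apply: marginal_cut.
  rewrite [RHS]unfold_in -[g \in Y]/(Y g) -[g \in E]/(E g) Y_g /E /= head_blockE.
  apply/esym/andb_idr=> /forallP agree; apply/eqP/eq_in_imset=> a; rewrite inE => lt_ak.
  exact/eqP/(implyP (agree a)).
have pos_EY : 0 < Pr p [predI E & Y] by rewrite -(Pr_ext p B_EY).
have pos_Y : 0 < Pr p Y by apply: lt_le_trans pos_EY (Pr_le _ _) => // g /andP[].
change (cPr p A B = cPr p A C).
rewrite (cPr_ext p (frefl A) B_EY) -(cPr_ext p (frefl A) Y_C).
apply: (@cPr_condition_indep _ _ p p_ge0 _ (tail_block k) Y E _ A
         (fun z => (k, pi k) \in z)) => [v | g | //].
- exact: cond_indep_cut.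
- by rewrite tail_blockE.
Qed.

Lemma cPr_pinv (R : realFieldType) n (p : {perm 'I_n} -> R) (E Y : pred {perm 'I_n}) :
  cPr (pinv p) E Y = cPr p [pred g | E (g^-1)%g] [pred g | Y (g^-1)%g].
Proof. by rewrite /cPr !Pr_pinv. Qed.

Lemma cond_indep_pinv (R : realFieldType) n (p : {perm 'I_n} -> R) s kap t lam :
  cond_indep_blocks p s kap t lam -> cond_indep_blocks (pinv p) t lam s kap.
Proof.
move=> indep y1 y2 x EY EX pos_inv.
pose Y : pred {perm 'I_n} := marginal_event kap lam y2 y1.
have EY_inv : [pred g | EY (g^-1)%g] =1 Y by move=> g; apply: marginal_event_inv.
have block_inv (i : 'I_t) (j : 'I_s) (g : {perm 'I_n}) :
    (graph_block lam kap i j (g^-1)%g == x i j) =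
    (graph_block kap lam j i g == swap_pairs (x i j)).
  by rewrite graph_block_inv (inv_eq (@swap_pairsK n)).
have pos_Y : 0 < Pr p Y by rewrite -(Pr_ext p EY_inv) -Pr_pinv.
change (cPr (pinv p) EX EY =
  \prod_(i : 'I_t) \prod_(j : 'I_s)
     cPr (pinv p) [pred g : {perm 'I_n} | graph_block lam kap i j g == x i j] EY).
rewrite exchange_big cPr_pinv (cPr_ext p (E' := [pred g | [forall j : 'I_s, forall i : 'I_t,
    graph_block kap lam j i g == swap_pairs (x i j)]]) _ EY_inv) => [|g]; last first.
  by apply/forallP/forallP=> eq_g j; apply/forallP=> i;
    [rewrite -block_inv | rewrite block_inv]; apply: (forallP (eq_g _)).
apply: etrans (indep y2 y1 (fun j i => swap_pairs (x i j)) pos_Y) _.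
apply: eq_bigr => j _; apply: eq_bigr => i _.
by rewrite cPr_pinv; apply: cPr_ext => // g; rewrite /= block_inv.
Qed.

Unset Implicit Arguments.

Theorem proposition3 (R : realFieldType) (n : nat) (p : {perm 'I_n} -> R)
  (hp : is_distr p) :
  bi_decomposable p <->
  (forall (s : nat) (kap : nat -> nat) (t : nat) (lam : nat -> nat),
     consec_part n s kap -> consec_part n t lam ->
     cond_indep_blocks p s kap t lam).
Proof.
have p_ge0 : forall g, 0 <= p g by case: hp.
split=> [bidec s kap t lam kap_part lam_part | all_indep].
  exact: bidecomposable_cond_indep.
split; first exact: cond_indep_Ldec.
apply: cond_indep_Ldec => [g | s kap t lam kap_part lam_part]; first exact: p_ge0.
exact/cond_indep_pinv/all_indep.
Qed.
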